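(* Assume the transversality condition holds at $(t^*,\bm x^* )\in I\times S$, and that PWS solutions $\bm x(t;\bm y,s)$ are Lipschitz continuous in the initial data $(\bm y,s)$. Then there exists $\epsilon>0$ such that for all $\bm y\in K^\epsilon_+:=\bar B_\epsilon(\bm x^* )\cap S$ and $(t,s)\in J^\epsilon_+:=\{(t,s)\in[t^*,t^*+\epsilon]^2: t>s\}$, the trajectory $\bm x(t;\bm y,s)$ has no transition in the time interval $(s,t^*+\epsilon]$. Furthermore, let $$M^\epsilon_+=\tfrac12\sup_{(t,s)\in J^\epsilon_+,\ \bm y\in K^\epsilon_+}\big|\dot{\bm x}(t)\cdot H_g(\bm x(t))\dot{\bm x}(t)+\nabla g(\bm x(t))\cdot\ddot{\bm x}(t)\big|,$$ where $\bm x(t)=\bm x(t;\bm y,s)$. If $0<t-s<\min\big(t^*+\epsilon-s,\ \alpha_S^2/M^\epsilon_+\big)$, then $g(\bm x(t;\bm y,s))>0$.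
   Context: Setting: $I$ bounded open interval, $U\subset\mathbb R^d$ bounded open, switching function $g\in C^2$ with $\nabla g\ne0$, $S=\{g=0\}$, $U_\pm=\{\pm g>0\}$; PWS system $\dot{\bm x}=\bm f_\pm(t,\bm x)$ on $U_\pm$, $\bm f_\pm\in C^1(I\times(U_\pm\cup S)\to\mathbb R^d)$. Transversality: nonzero $\alpha_S$ with $\nabla g(\bm x^* )\cdot\bm f_\pm(t^*,\bm x^* )\ge\alpha_S^2$ on $I\times S$. Solutions satisfy (H1) finitely many transition times (times at which $\bm x(t)\in S$); (H2) one-sided limits of $\dot{\bm x}$ at a transition equal $\bm f_\pm$ on the side in $U_\pm$; (H3) $\bm x$ is $C^2$ with bounded $\ddot{\bm x}$ away from transitions. $\bm x(t;\bm y,s)$ denotes the PWS solution with $\bm x(s)=\bm y$ (for $\bm y\in S$ and $t>s$ it evolves by $\bm f_+$). $H_g$ is the Hessian of $g$; $\bar B_\epsilon$ is a closed ball. *)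

From HB Require Import structures.
From mathcomp Require Import all_boot all_order all_algebra.
From mathcomp Require Import all_classical all_reals all_analysis.
Set Implicit Arguments. Unset Strict Implicit. Unset Printing Implicit Defensive.
Import Order.TTheory GRing.Theory Num.Theory.
Import numFieldNormedType.Exports.
Local Open Scope classical_set_scope.
Local Open Scope ring_scope.

Section PWS.
Variables (R : realType) (d : nat).
Notation vec := 'rV[R]_d.

(** Euclidean norm on R^d (the paper's balls are Euclidean). *)
Definition enorm (v : vec) : R := Num.sqrt (\sum_(i < d) (v ord0 i) ^+ 2).

Definition cball (x : vec) (eps : R) : set vec := [set y | enorm (y - x) <= eps].

Definition Sw (U : set vec) (g : vec -> R) : set vec := [set x | U x /\ g x = 0].
Definition Up (U : set vec) (g : vec -> R) : set vec := [set x | U x /\ 0 < g x].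
Definition Um (U : set vec) (g : vec -> R) : set vec := [set x | U x /\ g x < 0].

Definition C2_on (U : set vec) (g : vec -> R) : Prop :=
  (forall x, U x -> differentiable g x) /\
  (forall v, forall x, U x -> differentiable ('D_v g) x) /\
  (forall v w, forall x, U x -> {for x, continuous ('D_w ('D_v g))}).

(** nabla g(x) . v, written as the directional derivative *)
Definition gradv (g : vec -> R) (x v : vec) : R := 'D_v g x.
(** v . H_g(x) v, written as the second directional derivative *)
Definition hessv (g : vec -> R) (x v : vec) : R := 'D_v ('D_v g) x.

Definition C1_on_set (A : set (R * vec)) (F : R * vec -> vec) : Prop :=
  exists O : set (R * vec), open O /\ A `<=` O /\
  exists G : R * vec -> vec,
    (forall p, A p -> G p = F p) /\
    (forall p, O p -> differentiable G p) /\
    (forall w p, O p -> {for p, continuous ('D_w G)}).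

Definition PWS_solution (I : set R) (U : set vec) (g : vec -> R)
    (fp fm : R -> vec -> vec) (x : R -> vec) : Prop :=
  (forall t, I t -> U (x t)) /\
  {within I, continuous x} /\
  (forall t, I t -> Up U g (x t) -> is_derive t 1 x (fp t (x t))) /\
  (forall t, I t -> Um U g (x t) -> is_derive t 1 x (fm t (x t))) /\
  finite_set [set t | I t /\ Sw U g (x t)] /\
  (forall tau, I tau -> Sw U g (x tau) ->
     ((\forall t \near tau^'-, Up U g (x t)) ->
        derive1 x t @[t --> tau^'-] --> fp tau (x tau)) /\
     ((\forall t \near tau^'-, Um U g (x t)) ->
        derive1 x t @[t --> tau^'-] --> fm tau (x tau)) /\
     ((\forall t \near tau^'+, Up U g (x t)) ->
        derive1 x t @[t --> tau^'+] --> fp tau (x tau)) /\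
     ((\forall t \near tau^'+, Um U g (x t)) ->
        derive1 x t @[t --> tau^'+] --> fm tau (x tau))) /\
  (forall t, I t -> ~ Sw U g (x t) ->
     (\forall u \near t, derivable x u 1 /\ derivable (derive1 x) u 1) /\
     {for t, continuous (derive1 (derive1 x))}) /\
  (exists B : R, forall t, I t -> ~ Sw U g (x t) -> `|derive1 (derive1 x) t| <= B).

(** M^eps_+ of the paper, for the solution map X (X y s t = x(t; y, s)). *)
Definition Mplus (U : set vec) (g : vec -> R) (X : vec -> R -> R -> vec)
    (tst : R) (xst : vec) (eps : R) : \bar R :=
  ((2 : R)^-1)%:E * ereal_sup
    [set r : \bar R | exists t s y,
       [/\ (tst <= s)%R, (s < t)%R, (t <= tst + eps)%R,
           (cball xst eps `&` Sw U g) y &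
           r = (`| hessv g (X y s t) ((derive1 (X y s)) t)
                 + gradv g (X y s t) (derive1 (derive1 (X y s)) t) |%R)%:E]].

End PWS.

From mathcomp Require Import all_boot all_order all_algebra.
From mathcomp Require Import all_classical all_reals all_analysis.
From mathcomp Require Import ring lra.
Import Order.TTheory GRing.Theory Num.Theory.
Import numFieldNormedType.Exports.
Local Open Scope classical_set_scope.
Local Open Scope ring_scope.
Set Implicit Arguments. Unset Strict Implicit.

(* Instead of the paper's second-order Taylor bound we prove the stronger monotonicity statement.
   (1) Transversality is an open condition: f_+ and f_- extend to C^1 maps
   and the partial derivatives of g are continuous, so grad g(x) . f_(+/-)(t, x)
   stays positive for (t, x) near (t*, x* ) (transversality_persists,
   transversal_near).  (2) Lipschitz dependence on the initial data keeps
   x(u; y, s) in that neighbourhood for y in a small ball and s, u in a short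
   window (lipschitz_close, transversal_window).  (3) Off S,
   (g o x)' = grad g . f_(+/-) > 0, so g o x increases strictly from 0 up to
   the first transition and is positive there; transitions being finitely
   many, there is none at all (Section FirstExit).  lemmaB1 combines (2), (3). *)

Lemma is_derive_comp_dir (R : realType) d (g : 'rV[R]_d -> R)
    (X : R -> 'rV[R]_d) (c : R) (v : 'rV[R]_d) :
  is_derive c (1 : R) X v -> differentiable g (X c) ->
  is_derive c (1 : R) (g \o X) ('D_v g (X c)).
Proof.
move=> hX hg.
have dX : differentiable X c by apply/derivable1_diffP; case: hX.
have dgX : differentiable (g \o X) c by apply: differentiable_comp.
have -> : 'D_v g (X c) = 'D_1 (g \o X) c.
  rewrite (deriveE v hg) (deriveE (1 : R) dgX) (diff_comp dX hg) /=.
  by rewrite -(deriveE (1 : R) dX) derive_val.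
by apply: derivableP; exact/derivable1_diffP.
Qed.

Lemma derive_dir_coord (R : realType) d (g : 'rV[R]_d -> R) (x w : 'rV[R]_d) :
  differentiable g x ->
  'D_w g x = \sum_(j < d) w 0 j * 'D_(delta_mx 0 j) g x.
Proof.
move=> dg; rewrite deriveE // {1}(row_sum_delta w) linear_sum.
by apply: eq_bigr => j _; rewrite linearZ /= -deriveE.
Qed.

Lemma continuous_coord_pairing (R : realType) d (g : 'rV[R]_d -> R)
    (G : R * 'rV[R]_d -> 'rV[R]_d) (p0 : R * 'rV[R]_d) :
  {for p0, continuous G} ->
  (forall j, {for p0.2, continuous ('D_(delta_mx 0 j) g)}) ->
  {for p0, continuous (fun p => \sum_(j < d) G p 0 j * 'D_(delta_mx 0 j) g p.2)}.
Proof.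
move=> cG cD.
apply: (@cvg_big R _ +%R 0 predT add_continuous) => // j _.
apply: cvgM; first exact: (continuous_comp cG (@coord_continuous R 1 d 0 j (G p0))).
apply: (continuous_comp _ (cD j)).
by case: p0 {cG cD} => t x; exact: cvg_snd.
Qed.

Lemma transversality_persists (R : realType) d (U : set 'rV[R]_d)
    (g : 'rV[R]_d -> R) (A : set (R * 'rV[R]_d)) (F : R * 'rV[R]_d -> 'rV[R]_d)
    (p0 : R * 'rV[R]_d) (c : R) :
  (forall x, U x -> differentiable g x) ->
  (forall j, {for p0.2, continuous ('D_(delta_mx 0 j) g)}) ->
  (forall p, A p -> U p.2) -> C1_on_set A F -> A p0 ->
  c < gradv g p0.2 (F p0) ->
  \forall p \near p0, A p -> c < gradv g p.2 (F p).
Proof.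
move=> dg cD AU [Ob [_ [AO [G [FG [dG _]]]]]] Ap0 cp0.
pose H p := \sum_(j < d) G p 0 j * 'D_(delta_mx 0 j) g p.2.
have HE p : A p -> gradv g p.2 (F p) = H p.
  by move=> Ap; rewrite /gradv -FG // derive_dir_coord //; exact/dg/AU.
have cH : {for p0, continuous H}.
  apply: continuous_coord_pairing => //.
  exact/differentiable_continuous/dG/AO.
rewrite HE // in cp0.
near=> p; move=> Ap; rewrite HE //; near: p; exact: cvgr_gt cH _ cp0.
Unshelve. all: by end_near.
Qed.

Lemma finite_set_min (R : realType) (A : set R) (t : R) :
  finite_set A -> A t -> exists2 m, A m & forall u, A u -> m <= u.
Proof.
move=> /finite_seqP[s ->] /=; elim: s t => [//|x s IH] t _ /=.
case: s IH => [|y s] IH.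
  by exists x; rewrite ?mem_seq1 // => u; rewrite mem_seq1 => /eqP ->.
have [m ms mle] := IH y (mem_head _ _).
have [xm|mx] := leP x m.
  exists x; first exact: mem_head.
  by move=> u; rewrite inE => /orP[/eqP->//|/mle]; exact: le_trans.
exists m; first by rewrite inE ms orbT.
by move=> u; rewrite inE => /orP[/eqP->|/mle//]; exact: ltW.
Qed.

Lemma no_first_element (R : realType) (Z : set R) (s T : R) :
  finite_set Z ->
  (forall u, s < u -> u <= T -> (forall c, s < c -> c < u -> ~ Z c) -> ~ Z u) ->
  forall u, s < u -> u <= T -> ~ Z u.
Proof.
move=> finZ noZ u su uT Zu.
pose A := Z `&` [set v | s < v /\ v <= u].
have finA : finite_set A by apply: sub_finite_set finZ => v [].
have [m [Zm [sm mu]] mmin] := finite_set_min finA (conj Zu (conj su (lexx u))).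
apply: noZ Zm => // [|c sc cm Zc]; first exact: le_trans mu uT.
by have := mmin c (conj Zc (conj sc (ltW (lt_le_trans cm mu)))); lra.
Qed.

Lemma continuous_within_comp (R : realType) d (A : set R) (X : R -> 'rV[R]_d)
    (g : 'rV[R]_d -> R) :
  {within A, continuous X} -> (forall x, A x -> {for X x, continuous g}) ->
  {within A, continuous (g \o X)}.
Proof.
move=> /subspace_continuousP cX cg; apply/subspace_continuousP => x Ax.
exact: (continuous_cvg _ (cg x Ax) (cX x Ax)).
Qed.

Lemma enorm0 (R : realType) d : enorm (0 : 'rV[R]_d) = 0.
Proof. by rewrite /enorm big1 ?sqrtr0 // => j _; rewrite mxE expr0n. Qed.

(* The sup norm of the normed-space structure is bounded by the Euclidean
   norm, so Euclidean balls transfer to the topology of 'rV_d. *)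
Lemma mx_norm_le_enorm (R : realType) d (v : 'rV[R]_d) : `|v| <= enorm v.
Proof.
have -> : `|v| = mx_norm v by [].
rewrite mx_normrE; apply/bigmax_leP; split; first exact: sqrtr_ge0.
move=> [i j] _ /=; rewrite (ord1 i) /enorm -(sqrtr_sqr (v 0 j)).
have h0 : 0 <= \sum_(k < d | k != j) v ord0 k ^+ 2.
  by apply: sumr_ge0 => k _; exact: sqr_ge0.
rewrite ler_sqrt; last by rewrite (bigD1 j) //= addr_ge0 // sqr_ge0.
by rewrite (bigD1 j) //= lerDl.
Qed.

Lemma derive_g_pos_off_S (R : realType) d (I : set R) (U : set 'rV[R]_d)
    (g : 'rV[R]_d -> R) (fp fm : R -> 'rV[R]_d -> 'rV[R]_d) (x : R -> 'rV[R]_d)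
    (t : R) :
  (forall z, U z -> differentiable g z) ->
  PWS_solution I U g fp fm x -> I t -> ~ Sw U g (x t) ->
  (Up U g (x t) -> 0 < gradv g (x t) (fp t (x t))) ->
  (Um U g (x t) -> 0 < gradv g (x t) (fm t (x t))) ->
  derivable (g \o x) t 1 /\ 0 < derive1 (g \o x) t.
Proof.
move=> dg [Ux [_ [dp [dm _]]]] It nS pos_p pos_m.
have Uxt := Ux t It.
suff [D dD D0] : exists2 D, is_derive t 1 (g \o x) D & 0 < D.
  by split; [case: dD | rewrite derive1E derive_val].
have [gn|gp|g0] := ltgtP (g (x t)) 0.
- exists (gradv g (x t) (fm t (x t))); last exact/pos_m.
  exact: is_derive_comp_dir (dm t It (conj Uxt gn)) (dg _ Uxt).
- exists (gradv g (x t) (fp t (x t))); last exact/pos_p.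
  exact: is_derive_comp_dir (dp t It (conj Uxt gp)) (dg _ Uxt).
- by case: nS.
Qed.

Lemma transversal_near (R : realType) d (I : set R) (U : set 'rV[R]_d)
    (g : 'rV[R]_d -> R) (fp fm : R -> 'rV[R]_d -> 'rV[R]_d) (t0 : R)
    (x0 : 'rV[R]_d) :
  (forall x, U x -> differentiable g x) ->
  (forall j, {for x0, continuous ('D_(delta_mx 0 j) g)}) ->
  C1_on_set (I `*` (Up U g `|` Sw U g)) (fun p => fp p.1 p.2) ->
  C1_on_set (I `*` (Um U g `|` Sw U g)) (fun p => fm p.1 p.2) ->
  I t0 -> Sw U g x0 ->
  0 < gradv g x0 (fp t0 x0) -> 0 < gradv g x0 (fm t0 x0) ->
  exists2 e, 0 < e & forall t x, I t -> `|t0 - t| < e -> `|x0 - x| < e ->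
    (Up U g x -> 0 < gradv g x (fp t x)) /\ (Um U g x -> 0 < gradv g x (fm t x)).
Proof.
move=> dg cD C1p C1m It0 Sx0 pos_p pos_m.
have Ap p : (I `*` (Up U g `|` Sw U g)) p -> U p.2 by case=> _ [[]|[]].
have Am p : (I `*` (Um U g `|` Sw U g)) p -> U p.2 by case=> _ [[]|[]].
have near_p := @transversality_persists R d U g _ (fun p => fp p.1 p.2)
  (t0, x0) 0 dg cD Ap C1p (conj It0 (or_intror Sx0)) pos_p.
have near_m := @transversality_persists R d U g _ (fun p => fm p.1 p.2)
  (t0, x0) 0 dg cD Am C1m (conj It0 (or_intror Sx0)) pos_m.
have [e e0 ball_pm] := (nbhs_ballP _ _).1 (filterI near_p near_m).
exists e => // t x It ht hx.
have txe : ball (t0, x0) e (t, x) by split; rewrite /= -ball_normE.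
have [hp hm] := ball_pm _ txe.
by split => Vx; [apply: hp | apply: hm]; split => //; left.
Qed.

Lemma lipschitz_close (R : realType) d (I : set R) (U : set 'rV[R]_d)
    (X : 'rV[R]_d -> R -> R -> 'rV[R]_d) (L : R) (x0 y : 'rV[R]_d) (s u r : R) :
  (forall t s s' y y', I t -> I s -> I s' -> U y -> U y' ->
     enorm (X y s t - X y' s' t) <= L * (enorm (y - y') + `|s - s'|)) ->
  I s -> I u -> U y -> X y u u = y ->
  enorm (y - x0) <= r -> `|s - u| <= r ->
  `|x0 - X y s u| <= r * (`|L| + 1).
Proof.
move=> Lip Is Iu Uy Xuu yx0 su.
have hy : `|x0 - y| <= r by rewrite distrC; exact: le_trans (mx_norm_le_enorm _) yx0.
have hX : `|y - X y s u| <= `|L| * r.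
  rewrite -{1}Xuu distrC; apply: le_trans (mx_norm_le_enorm _) _.
  apply: le_trans (Lip u s u y y Iu Is Iu Uy Uy) _.
  rewrite subrr enorm0 add0r.
  have := ler_norm L; have := normr_ge0 L; have := normr_ge0 (s - u); nra.
have := ler_distD y x0 (X y s u); lra.
Qed.

(* Choice of the window size: eps < c, and the distance bound
   eps (|L| + 1) of lipschitz_close stays below e. *)
Lemma small_window (R : realFieldType) (e c L : R) : 0 < e -> 0 < c ->
  exists eps, [/\ 0 < eps, eps < c & eps * (`|L| + 1) < e].
Proof.
move=> e0 c0; have L1 : 0 < `|L| + 1 by rewrite ltr_wpDl.
have m0 : 0 < Order.min e c by rewrite lt_min e0 c0.
have [me mc] : Order.min e c <= e /\ Order.min e c <= c by rewrite !ge_min !lexx orbT.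
exists (Order.min e c / (2 * (`|L| + 1))); split.
- by rewrite divr_gt0 // mulr_gt0.
- rewrite ltr_pdivrMr ?mulr_gt0 //; have := normr_ge0 L; nra.
- have -> : Order.min e c / (2 * (`|L| + 1)) * (`|L| + 1) = Order.min e c / 2.
    by field; rewrite lt0r_neq0.
  lra.
Qed.

Lemma transversal_window (R : realType) d (a b : R) (U : set 'rV[R]_d)
    (g : 'rV[R]_d -> R) (fp fm : R -> 'rV[R]_d -> 'rV[R]_d)
    (X : 'rV[R]_d -> R -> R -> 'rV[R]_d) (L tst : R) (xst : 'rV[R]_d) :
  let I := `]a, b[%classic in
  (forall x, U x -> differentiable g x) ->
  (forall j, {for xst, continuous ('D_(delta_mx 0 j) g)}) ->
  C1_on_set (I `*` (Up U g `|` Sw U g)) (fun p => fp p.1 p.2) ->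
  C1_on_set (I `*` (Um U g `|` Sw U g)) (fun p => fm p.1 p.2) ->
  I tst -> Sw U g xst ->
  0 < gradv g xst (fp tst xst) -> 0 < gradv g xst (fm tst xst) ->
  (forall t s s' y y', I t -> I s -> I s' -> U y -> U y' ->
     enorm (X y s t - X y' s' t) <= L * (enorm (y - y') + `|s - s'|)) ->
  (forall y u, U y -> I u -> X y u u = y) ->
  exists eps, [/\ 0 < eps, tst + eps < b &
    forall y s u, (cball xst eps `&` Sw U g) y ->
      tst <= s -> s <= u -> u <= tst + eps ->
      (Up U g (X y s u) -> 0 < gradv g (X y s u) (fp u (X y s u))) /\
      (Um U g (X y s u) -> 0 < gradv g (X y s u) (fm u (X y s u)))].
Proof.
move=> I dg cD C1p C1m Itst Sxst trp trm Lip Xuu.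
have [atst tstb] : a < tst /\ tst < b by move: Itst; rewrite /I /= in_itv /= => /andP.
have [e e0 near_tr] := transversal_near dg cD C1p C1m Itst Sxst trp trm.
have btst : 0 < b - tst by rewrite subr_gt0.
have [eps [eps0 epsb epsL]] := small_window L e0 btst.
have epse : eps < e by have := normr_ge0 L; nra.
exists eps; split => //; first lra.
have inI v : tst <= v -> v <= tst + eps -> I v.
  by move=> tv ve; rewrite /I /= in_itv /=; apply/andP; split; lra.
move=> y s u [cy [Uy _]] ts su ue; have Iu := inI u (le_trans ts su) ue.
apply: near_tr => //; first by rewrite distrC ger0_norm ?subr_ge0; lra.
have hsu : `|s - u| <= eps by rewrite distrC ger0_norm ?subr_ge0 //; lra.
apply: le_lt_trans epsL.
exact: lipschitz_close Lip (inI s ts (le_trans su ue)) Iu Uy (Xuu y u Uy Iu) cy hsu.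
Qed.

Section FirstExit.
Variables (R : realType) (d : nat) (I : set R) (U : set 'rV[R]_d).
Variables (g : 'rV[R]_d -> R) (fp fm : R -> 'rV[R]_d -> 'rV[R]_d).
Variables (x : R -> 'rV[R]_d) (s T : R).
Hypothesis dg : forall z, U z -> differentiable g z.
Hypothesis solx : PWS_solution I U g fp fm x.
Hypothesis gxs : g (x s) = 0.
Hypothesis window_in_I : [set` `[s, T]] `<=` I.
Hypothesis transversal : forall u, s < u -> u <= T ->
  (Up U g (x u) -> 0 < gradv g (x u) (fp u (x u))) /\
  (Um U g (x u) -> 0 < gradv g (x u) (fm u (x u))).

(* Before the first transition, g o x increases strictly from g (x s) = 0. *)
Lemma pos_before_transition u : s < u -> u <= T ->
  (forall c, s < c -> c < u -> ~ Sw U g (x c)) -> 0 < g (x u).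
Proof.
move=> su uT noS; rewrite -gxs.
have [Ux [cx _]] := solx.
have sub : [set` `[s, u]] `<=` I.
  by apply: subset_trans window_in_I; apply/subset_itv; rewrite bnd_simp.
have cgx : {within `[s, u], continuous (g \o x)}.
  apply: continuous_within_comp; first exact: continuous_subspaceW cx.
  by move=> c /sub Ic; exact/differentiable_continuous/dg/Ux.
have dpos c : c \in `]s, u[ -> derivable (g \o x) c 1 /\ 0 < derive1 (g \o x) c.
  rewrite in_itv /= => /andP[sc cu].
  have [tp tm] := transversal sc (ltW (lt_le_trans cu uT)).
  have Ic : I c by apply: sub; rewrite /= in_itv /= (ltW sc) (ltW cu).
  exact: derive_g_pos_off_S dg solx Ic (noS c sc cu) tp tm.
apply: (gtr0_derive1_lt_cc (fun c hc => (dpos c hc).1)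
                           (fun c hc => (dpos c hc).2) cgx);
  by rewrite ?in_itv /= ?lexx ?(ltW su).
Qed.

(* Hence, transitions being finitely many, there is none in ]s, T]. *)
Lemma no_transition u : s < u -> u <= T -> ~ Sw U g (x u).
Proof.
have [_ [_ [_ [_ [fin _]]]]] := solx.
have uI v : s < v -> v <= T -> I v.
  by move=> sv vT; apply: window_in_I; rewrite /= in_itv /= (ltW sv) vT.
move=> su uT Su.
apply: (@no_first_element R [set t | I t /\ Sw U g (x t)] s T fin) (conj (uI u su uT) Su) => //.
move=> v sv vT noS [_ [_ gv]].
suff : 0 < g (x v) by rewrite gv ltxx.
by apply: pos_before_transition => // c sc cv Sc; apply: (noS c) => //; split => //; apply: uI; lra.
Qed.

End FirstExit.

Theorem lemmaB1 (R : realType) (d : nat)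
  (a b : R) (U : set 'rV[R]_d) (g : 'rV[R]_d -> R)
  (fp fm : R -> 'rV[R]_d -> 'rV[R]_d) (alpha : R)
  (X : 'rV[R]_d -> R -> R -> 'rV[R]_d) (tst : R) (xst : 'rV[R]_d) :
  (* setting *)
  a < b ->
  open U -> bounded_set U ->
  C2_on U g ->
  (forall x, U x -> exists v, gradv g x v != 0) ->
  C1_on_set (`]a, b[%classic `*` (Up U g `|` Sw U g)) (fun p => fp p.1 p.2) ->
  C1_on_set (`]a, b[%classic `*` (Um U g `|` Sw U g)) (fun p => fm p.1 p.2) ->
  (* transversality on I x S *)
  alpha != 0 ->
  (forall t x, `]a, b[%classic t -> Sw U g x ->
     alpha ^+ 2 <= gradv g x (fp t x) /\ alpha ^+ 2 <= gradv g x (fm t x)) ->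
  (* X y s = x(. ; y, s) is the PWS solution on I with x(s) = y *)
  (forall y s, U y -> `]a, b[%classic s ->
     PWS_solution `]a, b[%classic U g fp fm (X y s) /\ X y s s = y) ->
  (* for y in S and t > s it evolves by f_+ *)
  (forall y s, Sw U g y -> `]a, b[%classic s ->
     (derive1 (X y s)) t @[t --> s^'+] --> fp s y) ->
  (* Lipschitz continuity in the initial data (y, s) *)
  (exists L : R, forall t s s' y y', `]a, b[%classic t -> `]a, b[%classic s -> `]a, b[%classic s' ->
     U y -> U y' ->
     enorm (X y s t - X y' s' t) <= L * (enorm (y - y') + `|s - s'|)) ->
  (* the point (t*, x* ) *)
  `]a, b[%classic tst -> Sw U g xst ->
  exists eps : R, 0 < eps /\ tst + eps < b /\
    (forall y s t, (cball xst eps `&` Sw U g) y ->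
       tst <= s -> s < t -> t <= tst + eps ->
       forall tau, s < tau -> tau <= tst + eps -> ~ Sw U g (X y s tau)) /\
    (forall y s t, (cball xst eps `&` Sw U g) y ->
       tst <= s -> s < t -> t <= tst + eps ->
       (0 < t - s /\
        ((t - s)%:E < Order.min ((tst + eps - s)%:E)
                         ((alpha ^+ 2)%:E / Mplus U g X tst xst eps))%E) ->
       0 < g (X y s t)).
Proof.
move=> _ _ _ [dg [dDg _]] _ C1p C1m alpha_nz transv sol _ [L Lip] Itst Sxst.
have alpha2 : 0 < alpha ^+ 2 by rewrite lt_def sqr_ge0 andbT expf_neq0.
have [trp trm] := transv _ _ Itst Sxst.
have cD j : {for xst, continuous ('D_(delta_mx 0 j) g)}.
  exact/differentiable_continuous/dDg/Sxst.1.
have [eps [eps0 epsb tr]] := transversal_window dg cD C1p C1m Itst Sxst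
  (lt_le_trans alpha2 trp) (lt_le_trans alpha2 trm) Lip
  (fun y u Uy Iu => (sol y u Uy Iu).2).
have [atst _] : a < tst /\ tst < b by move: Itst; rewrite /= in_itv /= => /andP.
(* Each trajectory started on S in the window satisfies Section FirstExit. *)
have window y s : (cball xst eps `&` Sw U g) y -> tst <= s -> s <= tst + eps ->
  [/\ PWS_solution `]a, b[%classic U g fp fm (X y s), g (X y s s) = 0,
      [set` `[s, tst + eps]] `<=` `]a, b[%classic &
      forall u, s < u -> u <= tst + eps ->
        (Up U g (X y s u) -> 0 < gradv g (X y s u) (fp u (X y s u))) /\
        (Um U g (X y s u) -> 0 < gradv g (X y s u) (fm u (X y s u)))].
  move=> Ky ts sT; have [_ [Uy gy]] := Ky.
  have sI : [set` `[s, tst + eps]] `<=` `]a, b[%classic.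
    by move=> v /=; rewrite !in_itv /= => /andP[sv ve]; apply/andP; split; lra.
  have Is : `]a, b[%classic s by apply: sI; rewrite /= in_itv /= lexx sT.
  have [sol_ys Xss] := sol y s Uy Is.
  split => //; first by rewrite Xss.
  by move=> u su; exact: tr Ky ts (ltW su).
exists eps; split => //; split => //; split.
- move=> y s t Ky ts st te.
  have [solx gxs sI trx] := window y s Ky ts (ltW (lt_le_trans st te)).
  exact: (no_transition dg solx gxs sI trx).
- move=> y s t Ky ts st te _.
  have [solx gxs sI trx] := window y s Ky ts (ltW (lt_le_trans st te)).
  apply: (pos_before_transition dg solx gxs sI trx st te) => c sc ct.
  by apply: (no_transition dg solx gxs sI trx sc); lra.
Qed.
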